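(* Let $\mathbf{X}\subseteq\mathbb{R}_+^n$ be an interval and $\mathrm{IC}(\mathbf{a}_0,\dots,\mathbf{a}_{n-1})$ an interval circulant matrix containing $\hat A$. Then $\mathrm{IC}(\mathbf{a}_0,\dots,\mathbf{a}_{n-1})$ is weakly tolerance $\mathbf{X}$-robust, i.e. there exist $A\in\mathrm{IC}(\mathbf{a}_0,\dots,\mathbf{a}_{n-1})$ and $x\in\mathbf{X}$ with $x\in\mathrm{Attr}(A)$, if and only if the system $\lambda(\hat A)\hat A^{n^2}\otimes x=\hat A^{n^2+1}\otimes x$ has a solution $x\in\mathbf{X}$.
   Context: Max algebra on $\mathbb{R}_+$: $\oplus=\max$, ordinary product, $A^t$ max-algebraic power; $\lambda(A)$ greatest max-algebraic eigenvalue (maximum cycle geometric mean); $\mathrm{Attr}(A)=\{x\in\mathbb{R}_+^n: A^{t+1}\otimes x=\lambda(A)A^t\otimes x\text{ for some }t\ge0\}$. An interval $\mathbf{X}=\prod_i\mathbf{X}_i$ has each $\mathbf{X}_i\subseteq\mathbb{R}_+$ nonempty of one of the forms $[\underline{x}_i,\overline{x}_i]$, $(\underline{x}_i,\overline{x}_i)$, $(\underline{x}_i,\overline{x}_i]$, $[\underline{x}_i,\overline{x}_i)$. $\mathrm{Circ}(a_0,\dots,a_{n-1})$ has entries $A_{i,j}=a_t$, $t\equiv j-i\pmod n$; $\mathrm{IC}(\mathbf{a}_0,\dots,\mathbf{a}_{n-1})$ is the set of all $\mathrm{Circ}(a_0,\dots,a_{n-1})$ with $a_t\in\mathbf{a}_t$,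 each $\mathbf{a}_t\subseteq\mathbb{R}_+$ a nonempty interval of one of the four forms with endpoints $\underline a_t\le\overline a_t$. $\underline a=\max_k\underline a_k$, $\hat A=\mathrm{Circ}(\hat a_0,\dots,\hat a_{n-1})$, $\hat a_i=\min\{\underline a,\overline a_i\}$. *)

From Stdlib Require Import Reals List Arith.
Import ListNotations.
Open Scope R_scope.

(* Matrices and vectors of dimension n are functions on indices; only the
   indices < n are relevant. *)
Definition mat := nat -> nat -> R.
Definition vec := nat -> R.

(* max-algebra sum of a finite list of nonnegative reals (0 = max-neutral on R_+) *)
Definition rmaxl (l : list R) : R := fold_right Rmax 0 l.

Definition mmul (n : nat) (A B : mat) : mat :=
  fun i j => rmaxl (map (fun k => A i k * B k j) (seq 0 n)).
Definition mvec (n : nat) (A : mat) (x : vec) : vec :=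
  fun i => rmaxl (map (fun k => A i k * x k) (seq 0 n)).

Definition mid : mat := fun i j => if Nat.eqb i j then 1 else 0.

Fixpoint mpow (n : nat) (A : mat) (t : nat) : mat :=
  match t with
  | O => mid
  | S t' => mmul n A (mpow n A t')
  end.

Fixpoint all_lists (n k : nat) : list (list nat) :=
  match k with
  | O => [[]]
  | S k' => flat_map (fun i => map (fun c => i :: c) (all_lists n k')) (seq 0 n)
  end.

Definition cycle_weight (A : mat) (c : list nat) : R :=
  let k := length c in
  fold_right Rmult 1
    (map (fun j => A (nth j c 0%nat) (nth ((j + 1) mod k) c 0%nat)) (seq 0 k)).

Definition geo_mean (p : R) (k : nat) : R :=
  if Rle_dec p 0 then 0 else Rpower p (/ INR k).

Definition lambda (n : nat) (A : mat) : R :=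
  rmaxl (flat_map (fun k => map (fun c => geo_mean (cycle_weight A c) k)
                                (all_lists n k))
                  (seq 1 n)).

Definition nonneg_vec (n : nat) (x : vec) : Prop := forall i, (i < n)%nat -> 0 <= x i.

Definition Attr (n : nat) (A : mat) (x : vec) : Prop :=
  nonneg_vec n x /\
  exists t : nat, forall i, (i < n)%nat ->
    mvec n (mpow n A (S t)) x i = lambda n A * mvec n (mpow n A t) x i.

(* An interval in R_+ of one of the four forms [l,u], (l,u), (l,u], [l,u):
   lc/rc say whether the left/right endpoint is included. *)
Record itv := Itv { lo : R; hi : R; lc : bool; rc : bool }.

Definition in_itv (I : itv) (x : R) : Prop :=
  (if lc I then lo I <= x else lo I < x) /\ (if rc I then x <= hi I else x < hi I).

Definition itv_ok (I : itv) : Prop :=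
  0 <= lo I /\ lo I <= hi I /\ exists x, in_itv I x.

Definition in_box (n : nat) (X : nat -> itv) (x : vec) : Prop :=
  forall i, (i < n)%nat -> in_itv (X i) (x i).

Definition Circ (n : nat) (a : nat -> R) : mat :=
  fun i j => a ((j + n - i) mod n)%nat.

Definition lo_max (n : nat) (ia : nat -> itv) : R :=
  rmaxl (map (fun k => lo (ia k)) (seq 0 n)).
Definition hat_a (n : nat) (ia : nat -> itv) : nat -> R :=
  fun i => Rmin (lo_max n ia) (hi (ia i)).
Definition hatA (n : nat) (ia : nat -> itv) : mat := Circ n (hat_a n ia).

Definition weakly_tolerance_robust (n : nat) (ia : nat -> itv) (X : nat -> itv) : Prop :=
  exists a : nat -> R,
    (forall t, (t < n)%nat -> in_itv (ia t) (a t)) /\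
    exists x : vec, in_box n X x /\ Attr n (Circ n a) x.

From Stdlib Require Import Reals List Arith ZArith Lia Lra Classical.
Import ListNotations.
Open Scope R_scope.

(* For a circulant [A = Circ n a], [(A^t x)_i] is the maximum, over words [l] of
   length [t] in [{0..n-1}], of [a_{l_1} ... a_{l_t} x_{i + l_1 + ... + l_t}].
   If [a] attains its maximum [lambda(A)] at [c], a pigeonhole exchange on words of
   length [>= n] shows [(A^{t+1} x)_i = lambda(A) (A^t x)_{i+c}] for [t >= n-1];
   so [x] satisfies the attractor equation at [t] iff [A^t x] is invariant under
   the shift by [c].  [hatA] attains its maximum [underline a] at the same [c], and
   [underline a * A <= lambda(A) * hatA] entrywise; squeezing [hatA^N (A^{T+n} x)]
   between multiples of shifts of [hatA^N x] transfers the shift invariance from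
   [A^{T+n} x] to [hatA^N x].  Conversely [hatA] itself lies in the interval
   circulant. *)

Lemma rmaxl_nonneg (l : list R) : 0 <= rmaxl l.
Proof. induction l as [|y l IH]; simpl; [lra|]. apply (Rle_trans _ _ _ IH), Rmax_r. Qed.

Lemma rmaxl_ub (l : list R) y : In y l -> y <= rmaxl l.
Proof.
  induction l as [|z l IH]; simpl; [tauto|]. intros [<-|Hy].
  - apply Rmax_l.
  - apply (Rle_trans _ _ _ (IH Hy)), Rmax_r.
Qed.

Lemma rmaxl_lub (l : list R) M : 0 <= M -> (forall y, In y l -> y <= M) -> rmaxl l <= M.
Proof. intros HM; induction l; simpl; intros H; [lra|]. apply Rmax_lub; auto. Qed.

Section RmaxlMap.
Context {A : Type}.
Variable f : A -> R.

Lemma rmaxl_map_ub l y : In y l -> f y <= rmaxl (map f l).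
Proof. intros Hy; apply rmaxl_ub, in_map, Hy. Qed.

Lemma rmaxl_map_lub l M : 0 <= M -> (forall y, In y l -> f y <= M) -> rmaxl (map f l) <= M.
Proof.
  intros HM H; apply rmaxl_lub; [exact HM|].
  intros y Hy; apply in_map_iff in Hy as [z [<- Hz]]; auto.
Qed.

Lemma rmaxl_map_scale l c : 0 <= c -> c * rmaxl (map f l) = rmaxl (map (fun y => c * f y) l).
Proof. intros Hc; induction l; simpl; [ring|]. rewrite <- IHl, RmaxRmult; auto. Qed.

Lemma rmaxl_map_attained l : l <> [] -> (forall y, In y l -> 0 <= f y) ->
  exists y, In y l /\ rmaxl (map f l) = f y.
Proof.
  induction l as [|a [|b l'] IH]; [tauto| |]; intros _ H.
  - exists a; split; [now left|]. apply Rmax_left, H; now left.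
  - destruct IH as [y [Hy Hr]]; [discriminate|intros; apply H; now right|].
    change (rmaxl (map f (a :: b :: l'))) with (Rmax (f a) (rmaxl (map f (b :: l')))).
    rewrite Hr; destruct (Rle_dec (f a) (f y)).
    + exists y; split; [now right|apply Rmax_right; lra].
    + exists a; split; [now left|apply Rmax_left; lra].
Qed.

End RmaxlMap.

Lemma rmaxl_map_ext {A} (f g : A -> R) l : (forall y, In y l -> f y = g y) -> rmaxl (map f l) = rmaxl (map g l).
Proof. intros H; f_equal; apply map_ext_in, H. Qed.

Lemma rmaxl_map_mono {A} (f g : A -> R) l : (forall y, In y l -> f y <= g y) -> rmaxl (map f l) <= rmaxl (map g l).
Proof.
  intros H; apply rmaxl_map_lub; [apply rmaxl_nonneg|].
  intros y Hy; apply (Rle_trans _ (g y)); [auto|apply (rmaxl_map_ub g), Hy].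
Qed.

Lemma rmaxl_map_cover {A B} (f : A -> R) (g : B -> R) l1 l2 :
  (forall y, In y l1 -> exists z, In z l2 /\ f y <= g z) ->
  (forall z, In z l2 -> exists y, In y l1 /\ g z <= f y) ->
  rmaxl (map f l1) = rmaxl (map g l2).
Proof.
  intros H1 H2; apply Rle_antisym; apply rmaxl_map_lub; try apply rmaxl_nonneg.
  - intros y Hy; destruct (H1 y Hy) as [z [Hz Hle]].
    apply (Rle_trans _ _ _ Hle), rmaxl_map_ub, Hz.
  - intros z Hz; destruct (H2 z Hz) as [y [Hy Hle]].
    apply (Rle_trans _ _ _ Hle), rmaxl_map_ub, Hy.
Qed.

Lemma rmaxl_map_comm {A B} (g : A -> B -> R) l1 l2 :
  rmaxl (map (fun k => rmaxl (map (fun m => g m k) l2)) l1) =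
  rmaxl (map (fun m => rmaxl (map (fun k => g m k) l1)) l2).
Proof.
  apply Rle_antisym; apply rmaxl_map_lub; try apply rmaxl_nonneg; intros y Hy;
    apply rmaxl_map_lub; try apply rmaxl_nonneg; intros z Hz.
  - apply (Rle_trans _ (rmaxl (map (fun k => g z k) l1))).
    + apply (rmaxl_map_ub (fun k => g z k)), Hy.
    + apply (rmaxl_map_ub (fun m => rmaxl (map (fun k => g m k) l1))), Hz.
  - apply (Rle_trans _ (rmaxl (map (fun m => g m z) l2))).
    + apply (rmaxl_map_ub (fun m => g m z)), Hy.
    + apply (rmaxl_map_ub (fun k => rmaxl (map (fun m => g m k) l2))), Hz.
Qed.

Lemma rmaxl_map_flat_map {A B} (f : B -> R) (g : A -> list B) l :
  rmaxl (map f (flat_map g l)) = rmaxl (map (fun a => rmaxl (map f (g a))) l).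
Proof.
  induction l as [|a l IH]; simpl; [reflexivity|]. rewrite map_app, <- IH.
  induction (map f (g a)) as [|y r IHr]; simpl.
  - symmetry; apply Rmax_right, rmaxl_nonneg.
  - rewrite IHr, Rmax_assoc; reflexivity.
Qed.

Lemma prod_map_le_pow {A} (h : A -> R) l M : (forall y, In y l -> 0 <= h y <= M) ->
  fold_right Rmult 1 (map h l) <= M ^ length l.
Proof.
  induction l as [|a l IH]; simpl; intros H; [lra|].
  destruct (H a (or_introl eq_refl)) as [Ha1 Ha2].
  assert (Hp : 0 <= fold_right Rmult 1 (map h l)).
  { clear IH Ha1 Ha2. induction l as [|b l IHl]; simpl; [lra|].
    apply Rmult_le_pos; [apply H; simpl; auto|apply IHl; intros y Hy; apply H; simpl in *; tauto]. }
  apply Rmult_le_compat; auto.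
Qed.

Lemma prod_repeat c k : fold_right Rmult 1 (repeat c k) = c ^ k.
Proof. induction k as [|k IH]; simpl; [reflexivity|]. now rewrite IH. Qed.

Lemma Z_of_nat_mod a n : (0 < n)%nat ->
  Z.of_nat (a mod n) = (Z.of_nat a - Z.of_nat n * Z.of_nat (a / n))%Z.
Proof. intros Hn; pose proof (Nat.div_mod_eq a n); lia. Qed.

Lemma mod_eq_of_Z n a b q : (0 < n)%nat ->
  Z.of_nat a = (Z.of_nat b + q * Z.of_nat n)%Z -> (a mod n = b mod n)%nat.
Proof. intros Hn Hq; apply Nat2Z.inj; rewrite !Nat2Z.inj_mod, Hq; apply Z.mod_add; lia. Qed.

Lemma circ_offset_add n u s : (s < n)%nat -> (((u + s) mod n + n - u mod n) mod n = s)%nat.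
Proof.
  intros Hs. rewrite <- (Nat.mod_small s n) at 2 by exact Hs.
  pose proof (Nat.mod_upper_bound u n ltac:(lia)).
  apply (mod_eq_of_Z _ _ _ (1 - Z.of_nat ((u + s) / n) + Z.of_nat (u / n))); [lia|].
  rewrite !Nat2Z.inj_sub, !Nat2Z.inj_add, !Z_of_nat_mod, Nat2Z.inj_add by lia. ring.
Qed.

Lemma add_circ_offset n i k : (i < n)%nat -> (k < n)%nat -> ((i + (k + n - i) mod n) mod n = k)%nat.
Proof.
  intros Hi Hk. rewrite <- (Nat.mod_small k n) at 2 by exact Hk.
  apply (mod_eq_of_Z _ _ _ (1 - Z.of_nat ((k + n - i) / n))); [lia|].
  rewrite Nat2Z.inj_add, Z_of_nat_mod, !Nat2Z.inj_sub, Nat2Z.inj_add by lia. ring.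
Qed.

Lemma pigeonhole_nat (f : nat -> nat) n m : (n <= m)%nat -> (forall k, (k <= m)%nat -> (f k < n)%nat) ->
  exists i j, (i < j <= m)%nat /\ f i = f j.
Proof.
  intros Hnm Hf. apply NNPP; intros Hno.
  assert (Hnd : NoDup (map f (seq 0 (S m)))).
  { apply NoDup_map_NoDup_ForallPairs; [|apply seq_NoDup].
    intros a b Ha Hb Hab; apply in_seq in Ha, Hb.
    destruct (lt_eq_lt_dec a b) as [[H|H]|H]; [|exact H|];
      exfalso; apply Hno; [exists a, b|exists b, a]; split; auto; lia. }
  assert (Hincl : incl (map f (seq 0 (S m))) (seq 0 n)).
  { intros y Hy; apply in_map_iff in Hy as [k [<- Hk]]; apply in_seq in Hk.
    apply in_seq; specialize (Hf k); lia. }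
  pose proof (NoDup_incl_length Hnd Hincl) as Hlen.
  rewrite length_map, !length_seq in Hlen; lia.
Qed.

Lemma shift_invariant_untranslate n (f : nat -> R) m c : (0 < n)%nat ->
  (forall k, f (k mod n) = f k) ->
  (forall j, f ((j + m) mod n)%nat = f (((j + c) mod n + m) mod n)%nat) ->
  forall i, f i = f ((i + c) mod n)%nat.
Proof.
  intros Hn Hf H i. specialize (H (i + (n - 1) * m)%nat).
  rewrite Nat.Div0.add_mod_idemp_l in H.
  replace (i + (n - 1) * m + m)%nat with (i + m * n)%nat in H by nia.
  replace (i + (n - 1) * m + c + m)%nat with (i + c + m * n)%nat in H by nia.
  rewrite !Nat.Div0.mod_add, Hf in H; exact H.
Qed.

Lemma in_all_lists n k l : In l (all_lists n k) <-> length l = k /\ Forall (fun s => (s < n)%nat) l.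
Proof.
  revert l; induction k as [|k IH]; intros l; simpl.
  - split; [intros [<-|[]]; simpl; auto|].
    intros [H _]; destruct l; [now left|discriminate].
  - rewrite in_flat_map; split.
    + intros [s [Hs Hl]]; apply in_map_iff in Hl as [c [<- Hc]]; apply in_seq in Hs.
      apply IH in Hc as [H1 H2]; simpl; split; [now f_equal|constructor; auto; lia].
    + intros [H1 H2]; destruct l as [|s c]; [discriminate|]; inversion H2; subst.
      exists s; split; [apply in_seq; lia|]. apply in_map, IH; simpl in H1; auto.
Qed.

Definition weight (e : nat -> R) (l : list nat) : R := fold_right (fun s r => e s * r) 1 l.

(* [path_max n e t x i] is [(Circ n e ^ t * x)_i] written as a maximum over the
   words [l] of length [t]: the word [l] is the path [i, i + l_1, i + l_1 + l_2, ...]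
   through the circulant. *)
Definition path_max n (e : nat -> R) t (x : vec) i : R :=
  rmaxl (map (fun l => weight e l * x ((i + list_sum l) mod n)%nat) (all_lists n t)).

Lemma weight_app e l1 l2 : weight e (l1 ++ l2) = weight e l1 * weight e l2.
Proof. induction l1 as [|s l1 IH]; simpl; [ring|]. rewrite IH; ring. Qed.

Lemma weight_repeat e c k : weight e (repeat c k) = e c ^ k.
Proof. induction k as [|k IH]; simpl; [reflexivity|]. rewrite IH; ring. Qed.

Lemma list_sum_repeat c k : list_sum (repeat c k) = (k * c)%nat.
Proof. induction k as [|k IH]; simpl; [reflexivity|]. rewrite IH; reflexivity. Qed.

Lemma path_max_mod n e t x i : path_max n e t x (i mod n) = path_max n e t x i.
Proof.
  apply rmaxl_map_ext; intros l _; now rewrite Nat.Div0.add_mod_idemp_l.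
Qed.

Lemma path_max_shift n e t (x : vec) m i :
  path_max n e t (fun j => x ((j + m) mod n)%nat) i = path_max n e t x ((i + m) mod n)%nat.
Proof.
  apply rmaxl_map_ext; intros l _.
  rewrite !Nat.Div0.add_mod_idemp_l; do 3 f_equal; lia.
Qed.

Lemma path_max_scale n e t (x : vec) c i : 0 <= c ->
  path_max n e t (fun j => c * x j) i = c * path_max n e t x i.
Proof.
  intros Hc; unfold path_max; rewrite rmaxl_map_scale by exact Hc.
  apply rmaxl_map_ext; intros; ring.
Qed.

Lemma path_max_0 n e (x : vec) i : (0 < n)%nat -> nonneg_vec n x -> path_max n e 0 x i = x (i mod n)%nat.
Proof.
  intros Hn Hx; unfold path_max; simpl.
  rewrite Nat.add_0_r, Rmult_1_l; apply Rmax_left, Hx, Nat.mod_upper_bound; lia.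
Qed.

Section NonnegWeights.
Variables (n : nat) (e : nat -> R).
Hypothesis n_gt0 : (0 < n)%nat.
Hypothesis e_ge0 : forall s, (s < n)%nat -> 0 <= e s.

Lemma weight_nonneg l : Forall (fun s => (s < n)%nat) l -> 0 <= weight e l.
Proof. induction 1; simpl; [lra|]. apply Rmult_le_pos; auto. Qed.

Lemma path_max_succ t x i : path_max n e (S t) x i =
  rmaxl (map (fun s => e s * path_max n e t x ((i + s) mod n)%nat) (seq 0 n)).
Proof.
  unfold path_max; simpl all_lists; rewrite rmaxl_map_flat_map.
  apply rmaxl_map_ext; intros s Hs; apply in_seq in Hs.
  rewrite rmaxl_map_scale, map_map by (apply e_ge0; lia).
  apply rmaxl_map_ext; intros l _; simpl.
  rewrite Rmult_assoc, Nat.Div0.add_mod_idemp_l, Nat.add_assoc; reflexivity.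
Qed.

Lemma path_max_mono t (x y : vec) i : (forall j, (j < n)%nat -> x j <= y j) ->
  path_max n e t x i <= path_max n e t y i.
Proof.
  intros H; apply rmaxl_map_mono; intros l Hl; apply in_all_lists in Hl as [_ Hl].
  apply Rmult_le_compat_l; [apply weight_nonneg, Hl|apply H, Nat.mod_upper_bound; lia].
Qed.

Lemma path_max_add x t : nonneg_vec n x ->
  forall N i, path_max n e N (path_max n e t x) i = path_max n e (N + t) x i.
Proof.
  intros Hx; induction N as [|N IH]; intros i.
  - rewrite path_max_0, path_max_mod; [reflexivity|exact n_gt0|].
    intros k _; apply rmaxl_nonneg.
  - simpl; rewrite !path_max_succ; apply rmaxl_map_ext; intros s _; now rewrite IH.
Qed.

Lemma path_max_eigen_succ nu T x : 0 <= nu ->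
  (forall j, (j < n)%nat -> path_max n e (S T) x j = nu * path_max n e T x j) ->
  forall m j, (j < n)%nat -> path_max n e (S (T + m)) x j = nu * path_max n e (T + m) x j.
Proof.
  intros Hnu HT; induction m as [|m IH]; intros j Hj; [rewrite Nat.add_0_r; auto|].
  rewrite Nat.add_succ_r, (path_max_succ (S _)), (path_max_succ (T + m)), rmaxl_map_scale by exact Hnu.
  apply rmaxl_map_ext; intros s _; rewrite IH by (apply Nat.mod_upper_bound; lia); ring.
Qed.

End NonnegWeights.

Lemma weight_pow_le n a b mu la l : 0 <= mu -> 0 <= la ->
  (forall s, (s < n)%nat -> 0 <= a s) -> (forall s, (s < n)%nat -> 0 <= b s) ->
  (forall s, (s < n)%nat -> mu * a s <= la * b s) -> Forall (fun s => (s < n)%nat) l ->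
  mu ^ length l * weight a l <= la ^ length l * weight b l.
Proof.
  intros Hmu Hla Ha Hb H; induction 1 as [|s l Hs Hl IH]; simpl; [lra|].
  replace (mu * mu ^ length l * (a s * weight a l)) with ((mu * a s) * (mu ^ length l * weight a l)) by ring.
  replace (la * la ^ length l * (b s * weight b l)) with ((la * b s) * (la ^ length l * weight b l)) by ring.
  apply Rmult_le_compat; auto.
  - apply Rmult_le_pos; auto.
  - apply Rmult_le_pos; [apply pow_le, Hmu|apply (weight_nonneg n); auto].
Qed.

Lemma path_max_pow_le n a b mu la t x i : (0 < n)%nat -> 0 <= mu -> 0 <= la ->
  (forall s, (s < n)%nat -> 0 <= a s) -> (forall s, (s < n)%nat -> 0 <= b s) -> nonneg_vec n x ->
  (forall s, (s < n)%nat -> mu * a s <= la * b s) ->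
  mu ^ t * path_max n a t x i <= la ^ t * path_max n b t x i.
Proof.
  intros Hn Hmu Hla Ha Hb Hx H; unfold path_max; rewrite !rmaxl_map_scale by (apply pow_le; auto).
  apply rmaxl_map_mono; intros l Hl; apply in_all_lists in Hl as [Hl1 Hl2].
  rewrite <- !Rmult_assoc, <- Hl1; apply Rmult_le_compat_r.
  - apply Hx, Nat.mod_upper_bound; lia.
  - apply weight_pow_le with n; auto.
Qed.

Lemma path_max_repeat_le n e c t x i : (c < n)%nat ->
  e c ^ t * x ((i + t * c) mod n)%nat <= path_max n e t x i.
Proof.
  intros Hc; rewrite <- weight_repeat, <- list_sum_repeat.
  apply (rmaxl_map_ub (fun l => weight e l * x ((i + list_sum l) mod n)%nat)), in_all_lists.
  split; [apply repeat_length|]. apply Forall_forall; intros y Hy; apply repeat_spec in Hy; lia.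
Qed.

Definition max_entry_at n (e : nat -> R) c : Prop :=
  (c < n)%nat /\ forall s, (s < n)%nat -> 0 <= e s <= e c.

Lemma max_entry_exists n e : (0 < n)%nat -> (forall s, (s < n)%nat -> 0 <= e s) ->
  exists c, max_entry_at n e c.
Proof.
  intros Hn He. destruct (rmaxl_map_attained e (seq 0 n)) as [c [Hc Hmax]].
  - destruct n; [lia|discriminate].
  - intros s Hs; apply in_seq in Hs; apply He; lia.
  - apply in_seq in Hc; exists c; split; [lia|]; intros s Hs; split; [auto|].
    rewrite <- Hmax; apply rmaxl_map_ub, in_seq; lia.
Qed.

Section MaxEntry.
Variables (n : nat) (e : nat -> R) (c : nat).
Hypothesis n_gt0 : (0 < n)%nat.
Hypothesis e_max : max_entry_at n e c.

Let e_ge0 s : (s < n)%nat -> 0 <= e s.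
Proof. intros Hs; apply e_max, Hs. Qed.

Lemma weight_le_pow l : Forall (fun s => (s < n)%nat) l -> weight e l <= e c ^ length l.
Proof.
  induction 1 as [|s l Hs Hl IH]; simpl; [lra|]. destruct e_max as [_ He].
  apply Rmult_le_compat; [apply He, Hs|apply weight_nonneg with n; auto|apply He, Hs|exact IH].
Qed.

(* A word of length at least [n] has a factor [l2] whose sum is congruent to
   [length l2 * c] (pigeonhole on the prefix sums); replacing [l2] by [c]'s
   keeps the endpoint of the path and can only increase its weight. *)
Lemma path_exchange l : Forall (fun s => (s < n)%nat) l -> (n <= length l)%nat ->
  exists l', length l' = pred (length l) /\ Forall (fun s => (s < n)%nat) l' /\
    weight e l <= e c * weight e l' /\ (list_sum l mod n = (c + list_sum l') mod n)%nat.
Proof.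
  intros Hl Hlen. destruct e_max as [Hc He].
  destruct (pigeonhole_nat (fun k => (list_sum (firstn k l) + k * (n - c)) mod n)%nat n (length l))
    as [i [j [Hij Hf]]]; [exact Hlen|intros; apply Nat.mod_upper_bound; lia|].
  set (l1 := firstn i l); set (l2 := firstn (j - i) (skipn i l)); set (l3 := skipn (j - i) (skipn i l)).
  assert (Hsplit : l = l1 ++ l2 ++ l3) by (unfold l1, l2, l3; rewrite !firstn_skipn; reflexivity).
  assert (L1 : length l1 = i) by (apply firstn_length_le; lia).
  assert (L2 : length l2 = (j - i)%nat) by (apply firstn_length_le; rewrite length_skipn; lia).
  assert (Hj : firstn j l = l1 ++ l2).
  { rewrite Hsplit; replace j with (length l1 + length l2)%nat by lia.
    rewrite firstn_app_2, firstn_app, Nat.sub_diag, firstn_O, app_nil_r, firstn_all; reflexivity. }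
  simpl in Hf; fold l1 in Hf; rewrite Hj, list_sum_app in Hf.
  rewrite Hsplit in Hl; apply Forall_app in Hl as [F1 Hl]; apply Forall_app in Hl as [F2 F3].
  exists (l1 ++ repeat c (j - i - 1) ++ l3); split; [|split; [|split]].
  - rewrite Hsplit, !length_app, repeat_length; lia.
  - repeat (apply Forall_app; split); auto.
    apply Forall_forall; intros y Hy; apply repeat_spec in Hy; lia.
  - rewrite Hsplit, !weight_app, weight_repeat.
    pose proof (weight_le_pow l2 F2) as H2; rewrite L2 in H2.
    replace (j - i)%nat with (S (j - i - 1)) in H2 by lia; simpl in H2.
    pose proof (weight_nonneg n e e_ge0 l1 F1); pose proof (weight_nonneg n e e_ge0 l3 F3).
    apply (Rle_trans _ (weight e l1 * (e c * e c ^ (j - i - 1) * weight e l3))); [|right; ring].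
    apply Rmult_le_compat_l; auto. apply Rmult_le_compat_r; auto.
  - rewrite Hsplit, !list_sum_app, list_sum_repeat.
    set (A := (list_sum l1 + list_sum l2 + j * (n - c))%nat) in Hf.
    set (B := (list_sum l1 + i * (n - c))%nat) in Hf.
    pose proof (Nat.div_mod_eq A n); pose proof (Nat.div_mod_eq B n).
    apply (mod_eq_of_Z _ _ _ (Z.of_nat (A / n) - Z.of_nat (B / n) - Z.of_nat (j - i))); [exact n_gt0|].
    unfold A, B in *. rewrite !Nat2Z.inj_add, !Nat2Z.inj_mul, !Nat2Z.inj_sub in * by lia.
    nia.
Qed.

Lemma path_max_succ_shift t x i : nonneg_vec n x -> (n <= S t)%nat ->
  path_max n e (S t) x i = e c * path_max n e t x ((i + c) mod n)%nat.
Proof.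
  intros Hx Ht. destruct e_max as [Hc He].
  apply Rle_antisym.
  - apply rmaxl_map_lub; [apply Rmult_le_pos; [apply e_ge0, Hc|apply rmaxl_nonneg]|].
    intros l Hl; apply in_all_lists in Hl as [Hl1 Hl2].
    destruct (path_exchange l Hl2 ltac:(lia)) as [l' [H1 [H2 [H3 H4]]]].
    assert (Hend : ((i + list_sum l) mod n = ((i + c) mod n + list_sum l') mod n)%nat).
    { rewrite <- Nat.Div0.add_mod_idemp_r, H4, Nat.Div0.add_mod_idemp_r, Nat.Div0.add_mod_idemp_l.
      f_equal; lia. }
    rewrite Hend; apply (Rle_trans _ (e c * (weight e l' * x (((i + c) mod n + list_sum l') mod n)%nat))).
    + rewrite <- Rmult_assoc; apply Rmult_le_compat_r; [apply Hx, Nat.mod_upper_bound; lia|exact H3].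
    + apply Rmult_le_compat_l; [apply e_ge0, Hc|].
      apply (rmaxl_map_ub (fun l => weight e l * x (((i + c) mod n + list_sum l) mod n)%nat)).
      apply in_all_lists; split; [lia|exact H2].
  - rewrite path_max_succ by auto.
    apply (rmaxl_map_ub (fun s => e s * path_max n e t x ((i + s) mod n)%nat)), in_seq; lia.
Qed.

Lemma path_max_add_shift x N : nonneg_vec n x -> (n <= S N)%nat ->
  forall k i, path_max n e (N + k) x i = e c ^ k * path_max n e N x ((i + k * c) mod n)%nat.
Proof.
  intros Hx HN; induction k as [|k IH]; intros i.
  - rewrite Nat.add_0_r, Nat.mul_0_l, Nat.add_0_r, path_max_mod; simpl; ring.
  - rewrite Nat.add_succ_r, path_max_succ_shift, IH, Nat.Div0.add_mod_idemp_l by (auto; lia).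
    simpl; rewrite Rmult_assoc; do 4 f_equal; lia.
Qed.

(* The eigen-relation persists at all later times, and from time [n - 1] on one
   step of [Circ n e] is [e c] times the shift by [c]. *)
Lemma path_max_eigen_periodic x T : nonneg_vec n x -> 0 < e c ->
  (forall j, (j < n)%nat -> path_max n e (S T) x j = e c * path_max n e T x j) ->
  forall j, path_max n e (T + n) x j = path_max n e (T + n) x ((j + c) mod n)%nat.
Proof.
  intros Hx Hpos HT j. rewrite <- (path_max_mod n e (T + n) x j).
  assert (Hjn : (j mod n < n)%nat) by (apply Nat.mod_upper_bound; lia).
  pose proof (path_max_eigen_succ n e n_gt0 e_ge0 (e c) T x ltac:(lra) HT n (j mod n) Hjn) as Hs.
  rewrite path_max_succ_shift, Nat.Div0.add_mod_idemp_l in Hs by (auto; lia).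
  apply Rmult_eq_reg_l with (e c); lra.
Qed.

End MaxEntry.

Lemma mvec_mmul n (A M : mat) x i :
  (forall m, (m < n)%nat -> 0 <= A i m) -> nonneg_vec n x ->
  mvec n (mmul n A M) x i = mvec n A (mvec n M x) i.
Proof.
  intros HA Hx; unfold mvec, mmul.
  transitivity (rmaxl (map (fun k => rmaxl (map (fun m => A i m * M m k * x k) (seq 0 n))) (seq 0 n))).
  - apply rmaxl_map_ext; intros k Hk; apply in_seq in Hk.
    rewrite Rmult_comm, rmaxl_map_scale by (apply Hx; lia). apply rmaxl_map_ext; intros; ring.
  - rewrite (rmaxl_map_comm (fun m k => A i m * M m k * x k)).
    apply rmaxl_map_ext; intros m Hm; apply in_seq in Hm.
    rewrite rmaxl_map_scale by (apply HA; lia). apply rmaxl_map_ext; intros; ring.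
Qed.

Lemma mvec_mpow_Circ n a x t i : (0 < n)%nat -> (forall s, (s < n)%nat -> 0 <= a s) ->
  nonneg_vec n x -> (i < n)%nat -> mvec n (mpow n (Circ n a) t) x i = path_max n a t x i.
Proof.
  intros Hn Ha Hx; revert i; induction t as [|t IH]; intros i Hi.
  - rewrite path_max_0, Nat.mod_small by auto. simpl; unfold mvec, mid.
    apply Rle_antisym.
    + apply rmaxl_map_lub; [apply Hx, Hi|]; intros k Hk; apply in_seq in Hk.
      destruct (Nat.eqb_spec i k) as [<-|]; [lra|]. rewrite Rmult_0_l; apply Hx; lia.
    + apply (Rle_trans _ ((if Nat.eqb i i then 1 else 0) * x i)); [rewrite Nat.eqb_refl; lra|].
      apply (rmaxl_map_ub (fun k => (if Nat.eqb i k then 1 else 0) * x k)), in_seq; lia.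
  - simpl; rewrite mvec_mmul, path_max_succ by (auto; intros; apply Ha, Nat.mod_upper_bound; lia).
    unfold mvec at 1, Circ.
    rewrite (rmaxl_map_ext _ (fun k => a ((k + n - i) mod n)%nat * path_max n a t x k))
      by (intros k Hk; apply in_seq in Hk; rewrite IH by lia; reflexivity).
    apply rmaxl_map_cover.
    + intros k Hk; apply in_seq in Hk. exists ((k + n - i) mod n)%nat.
      split; [apply in_seq; split; [lia|apply Nat.mod_upper_bound; lia]|].
      rewrite add_circ_offset by lia; lra.
    + intros s Hs; apply in_seq in Hs. exists ((i + s) mod n)%nat.
      split; [apply in_seq; split; [lia|apply Nat.mod_upper_bound; lia]|].
      rewrite <- (Nat.mod_small i n) at 3 by exact Hi. rewrite circ_offset_add by lia; lra.
Qed.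

Lemma geo_mean_pow M k : 0 <= M -> (0 < k)%nat -> geo_mean (M ^ k) k = M.
Proof.
  intros HM Hk; unfold geo_mean.
  destruct (Req_dec M 0) as [->|HM0]; [rewrite pow_i by lia; destruct (Rle_dec 0 0); lra|].
  assert (Hpos : 0 < M ^ k) by (apply pow_lt; lra).
  destruct (Rle_dec (M ^ k) 0); [lra|].
  rewrite <- Rpower_pow, Rpower_mult, Rinv_r by (try apply not_0_INR; lia || lra).
  apply Rpower_1; lra.
Qed.

Lemma geo_mean_le p M k : 0 <= M -> (0 < k)%nat -> p <= M ^ k -> geo_mean p k <= M.
Proof.
  intros HM Hk Hp; unfold geo_mean at 1; destruct (Rle_dec p 0); [exact HM|].
  rewrite <- (geo_mean_pow M k HM Hk); unfold geo_mean.
  destruct (Rle_dec (M ^ k) 0); [lra|].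
  apply Rle_Rpower_l; [left; apply Rinv_0_lt_compat, lt_0_INR; lia|lra].
Qed.

(* No cycle beats the largest entry, and the cycle [0, c, 2c, ...] of length [n]
   uses only [a c]. *)
Lemma lambda_Circ n a c : max_entry_at n a c -> lambda n (Circ n a) = a c.
Proof.
  intros [Hc Ha]. assert (Hn : (0 < n)%nat) by lia.
  assert (Hac : 0 <= a c) by (apply Ha, Hc).
  apply Rle_antisym.
  - apply rmaxl_lub; [exact Hac|]; intros y Hy.
    apply in_flat_map in Hy as [k [Hk Hy]]; apply in_seq in Hk.
    apply in_map_iff in Hy as [cyc [<- Hcyc]]; apply in_all_lists in Hcyc as [Hl _].
    apply geo_mean_le; [exact Hac|lia|]. unfold cycle_weight; rewrite Hl.
    replace (a c ^ k) with (a c ^ length (seq 0 k)) by now rewrite length_seq.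
    apply prod_map_le_pow.
    intros j _; apply Ha, Nat.mod_upper_bound; lia.
  - set (cyc := map (fun j => (j * c) mod n)%nat (seq 0 n)).
    assert (Hlen : length cyc = n) by (unfold cyc; rewrite length_map, length_seq; reflexivity).
    assert (Hnth : forall j, (j < n)%nat -> nth j cyc 0%nat = ((j * c) mod n)%nat).
    { intros j Hj; unfold cyc.
      rewrite (nth_indep _ _ ((j * c) mod n)%nat) by (rewrite length_map, length_seq; exact Hj).
      rewrite (map_nth (fun j => (j * c) mod n)%nat), seq_nth by exact Hj; reflexivity. }
    assert (Hw : cycle_weight (Circ n a) cyc = a c ^ n).
    { unfold cycle_weight; rewrite Hlen.
      replace (a c ^ n) with (fold_right Rmult 1 (map (fun _ => a c) (seq 0 n))).
      2:{ rewrite map_const, length_seq; apply prod_repeat. } f_equal; apply map_ext_in; intros j Hj; apply in_seq in Hj.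
      rewrite !Hnth by (try apply Nat.mod_upper_bound; lia). unfold Circ; f_equal.
      rewrite Nat.Div0.mul_mod_idemp_l; replace ((j + 1) * c)%nat with (j * c + c)%nat by lia.
      apply circ_offset_add, Hc. }
    rewrite <- (geo_mean_pow (a c) n Hac Hn), <- Hw.
    apply rmaxl_ub, in_flat_map; exists n; split; [apply in_seq; lia|].
    apply in_map_iff; exists cyc; split; [reflexivity|]; apply in_all_lists; split; [exact Hlen|].
    apply Forall_forall; intros y Hy; unfold cyc in Hy; apply in_map_iff in Hy as [j [<- _]].
    apply Nat.mod_upper_bound; lia.
Qed.

Section AttractorTransfer.
Variables (n : nat) (a b : nat -> R) (c : nat) (x : vec) (T : nat).
Hypothesis n_gt0 : (0 < n)%nat.
Hypothesis a_max : max_entry_at n a c.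
Hypothesis b_max : max_entry_at n b c.
Hypothesis a_pos : 0 < a c.
Hypothesis b_pos : 0 < b c.
Hypothesis entries_le : forall s, (s < n)%nat -> b c * a s <= a c * b s.
Hypothesis x_ge0 : nonneg_vec n x.
Hypothesis x_eigen :
  forall j, (j < n)%nat -> path_max n a (S T) x j = a c * path_max n a T x j.

Let a_ge0 s : (s < n)%nat -> 0 <= a s.
Proof. intros Hs; apply a_max, Hs. Qed.

Let b_ge0 s : (s < n)%nat -> 0 <= b s.
Proof. intros Hs; apply b_max, Hs. Qed.

(* Both bounds come from comparing paths: [b c ^ t * (Circ a ^ t x)] is at most
   [a c ^ t * (Circ b ^ t x)], and [Circ a ^ t x] dominates the path that
   repeats [c]. *)
Lemma path_max_attractor_squeeze N : (n <= S N)%nat -> forall j,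
  path_max n b N (path_max n a (T + n) x) j =
  a c ^ (T + n) * path_max n b N x ((j + (T + n) * c) mod n)%nat.
Proof.
  intros HN j. set (t := (T + n)%nat).
  apply Rle_antisym.
  - apply Rmult_le_reg_l with (b c ^ t); [apply pow_lt, b_pos|].
    rewrite <- path_max_scale by (apply pow_le; lra).
    apply (Rle_trans _ (path_max n b N (fun k => a c ^ t * path_max n b t x k) j)).
    + apply path_max_mono; auto. intros k _; apply path_max_pow_le; auto; lra.
    + rewrite path_max_scale, path_max_add, (path_max_add_shift n b c) by (auto; apply pow_le; lra).
      right; ring.
  - rewrite <- path_max_shift, <- path_max_scale by (apply pow_le; lra).
    apply path_max_mono; auto. intros k _; apply path_max_repeat_le, a_max.
Qed.

Lemma path_max_attractor_shift_invariant N : (n <= S N)%nat ->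
  forall i, path_max n b N x i = path_max n b N x ((i + c) mod n)%nat.
Proof.
  intros HN. set (t := (T + n)%nat).
  apply (shift_invariant_untranslate n _ (t * c)); [exact n_gt0|apply path_max_mod|].
  intros j. apply Rmult_eq_reg_l with (a c ^ t); [|apply pow_nonzero; lra].
  rewrite <- !path_max_attractor_squeeze by exact HN.
  rewrite <- path_max_shift; apply rmaxl_map_ext; intros l _; cbv beta.
  now rewrite <- (path_max_eigen_periodic n a c).
Qed.

End AttractorTransfer.

Lemma in_itv_bounds I v : in_itv I v -> lo I <= v <= hi I.
Proof. unfold in_itv; destruct (lc I), (rc I); intros [H1 H2]; lra. Qed.

Section HatMatrix.
Variables (n : nat) (ia : nat -> itv) (a : nat -> R) (c : nat).
Hypothesis ia_ok : forall t, (t < n)%nat -> itv_ok (ia t).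
Hypothesis a_in : forall t, (t < n)%nat -> in_itv (ia t) (a t).
Hypothesis a_max : max_entry_at n a c.

Lemma lo_max_le_max_entry : lo_max n ia <= a c.
Proof.
  destruct a_max as [Hc Ha]. apply rmaxl_map_lub; [apply Ha, Hc|].
  intros k Hk; apply in_seq in Hk.
  apply (Rle_trans _ (a k)); [apply in_itv_bounds, a_in; lia|apply Ha; lia].
Qed.

Lemma hat_a_at_max_entry : hat_a n ia c = lo_max n ia.
Proof.
  apply Rmin_left, (Rle_trans _ _ _ lo_max_le_max_entry), in_itv_bounds, a_in, a_max.
Qed.

Lemma hat_a_max_entry_at : max_entry_at n (hat_a n ia) c.
Proof.
  split; [apply a_max|]. intros s Hs; rewrite hat_a_at_max_entry; unfold hat_a; split.
  - destruct (ia_ok s Hs) as [H0 [H1 _]]. apply Rmin_glb; [apply rmaxl_nonneg|lra].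
  - apply Rmin_l.
Qed.

Lemma hat_a_dominates s : (s < n)%nat -> hat_a n ia c * a s <= a c * hat_a n ia s.
Proof.
  intros Hs. rewrite hat_a_at_max_entry.
  pose proof lo_max_le_max_entry as Hmu. pose proof (rmaxl_nonneg (map (fun k => lo (ia k)) (seq 0 n))).
  destruct a_max as [_ Ha]; specialize (Ha s Hs). pose proof (in_itv_bounds _ _ (a_in s Hs)).
  unfold hat_a, lo_max in *. destruct (Rle_dec (rmaxl (map (fun k => lo (ia k)) (seq 0 n))) (hi (ia s))).
  - rewrite Rmin_left by exact r; nra.
  - rewrite Rmin_right by lra; nra.
Qed.

End HatMatrix.

Theorem theorem4 (n : nat) (X : nat -> itv) (ia : nat -> itv)
  (hX : forall i, (i < n)%nat -> itv_ok (X i))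
  (hia : forall t, (t < n)%nat -> itv_ok (ia t))
  (hhat : forall t, (t < n)%nat -> in_itv (ia t) (hat_a n ia t)) :
  weakly_tolerance_robust n ia X <->
  exists x : vec, in_box n X x /\
    forall i, (i < n)%nat ->
      lambda n (hatA n ia) * mvec n (mpow n (hatA n ia) (n * n)) x i
      = mvec n (mpow n (hatA n ia) (S (n * n))) x i.
Proof.
  split.
  - intros [a [Ha [x [Hbox [Hx [T HT]]]]]]. exists x; split; [exact Hbox|]. intros i Hi.
    assert (Hn : (0 < n)%nat) by lia.
    assert (Ha0 : forall s, (s < n)%nat -> 0 <= a s).
    { intros s Hs; destruct (hia s Hs) as [H0 _]; pose proof (in_itv_bounds _ _ (Ha s Hs)); lra. }
    destruct (max_entry_exists n a Hn Ha0) as [c Hc].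
    pose proof (hat_a_max_entry_at n ia a c hia Ha Hc) as Hhat.
    assert (Hhat0 : forall s, (s < n)%nat -> 0 <= hat_a n ia s) by apply Hhat.
    assert (HNn : (n <= S (n * n))%nat) by nia.
    unfold hatA; rewrite (lambda_Circ n _ c), !mvec_mpow_Circ, (path_max_succ_shift n _ c) by auto.
    destruct (Req_dec (hat_a n ia c) 0) as [Hz|Hnz]; [rewrite Hz; ring|].
    assert (Hb_pos : 0 < hat_a n ia c) by (destruct Hhat as [Hc' Hb]; specialize (Hb c Hc'); lra).
    assert (Ha_pos : 0 < a c).
    { pose proof (lo_max_le_max_entry n ia a c Ha Hc).
      rewrite <- (hat_a_at_max_entry n ia a c Ha Hc) in *; lra. }
    assert (Hdom : forall s, (s < n)%nat -> hat_a n ia c * a s <= a c * hat_a n ia s)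
      by (intros; apply hat_a_dominates; auto).
    assert (Heigen : forall j, (j < n)%nat -> path_max n a (S T) x j = a c * path_max n a T x j)
      by (intros j Hj; rewrite <- !mvec_mpow_Circ, <- (lambda_Circ n a c); auto).
    now rewrite <- (path_max_attractor_shift_invariant n a _ c x T Hn Hc Hhat Ha_pos Hb_pos Hdom Hx Heigen
                      (n * n) HNn).
  - intros [x [Hbox Heq]]. exists (hat_a n ia); split; [exact hhat|].
    exists x; split; [exact Hbox|]; split.
    + intros k Hk; pose proof (in_itv_bounds _ _ (Hbox k Hk)); destruct (hX k Hk); lra.
    + exists (n * n)%nat; intros i Hi; symmetry; apply Heq, Hi.
Qed.
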